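(* Let $(G,c,\gamma)$ be an M2VPI system and run Algorithm 3 (described in the context) on it. If Algorithm 3 returns labels $y\in(\mathbb{R}\cup\{\infty\})^V$, then $y=y^{\max}$ provided the system is feasible. If Algorithm 3 returns INFEASIBLE, then the system is infeasible.
   Context: An M2VPI system: directed multigraph $G=(V,E)$, $n=|V|$, arc costs $c\in\mathbb{R}^E$, gains $\gamma\in\mathbb{R}^E_{>0}$; arc $e=(v,w)$ encodes $y_v-\gamma_ey_w\le c_e$. If feasible, $y^{\max}\in(\mathbb{R}\cup\{\infty\})^V$ is its pointwise maximal solution, with $y^{\max}_u=\infty$ iff $y_u$ is unbounded from above over the feasible set. Notation: for a walk $P$ with arcs $e_1,\dots,e_k$, $c(P):=\sum_i(\prod_{j<i}\gamma_{e_j})c_{e_i}$, $\gamma(P):=\prod_i\gamma_{e_i}$; a cycle at $u$ is a $u$-$u$ walk with distinct intermediate nodes, flow-absorbing if $\gamma(C)<1$; arc $(v,w)$ is violated w.r.t. labels $y$ if $y_v>c_{vw}+\gamma_{vw}y_w$. Grapevine$(H,y,s)$: for rounds $i=1,\dots,n$, every node $v$ simultaneously sets $y_v:=\min(y_v,\min_{vw\in\delta^+(v)}c_{vw}+\gamma_{vw}y_w)$, recording a minimizing arc $\mathrm{pred}(v,i)$ if $y_v$ decreased (ties broken arbitrarily); returns the new labels and the walk from $s$ traced by following recorded arcs in reverse chronological order from $\mathrm{pred}(s,n)$ (reading $\mathrm{pred}(v,i-1)$ if $\mathrm{pred}(v,i)$ is empty). $H_u$: split $u$ into $u$ (keeping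 outgoing arcs) and a new sink $u'$ receiving all arcs of $H$ entering $u$ (same costs and gains). Algorithm 3: $y\equiv\infty$, $G^{(0)}=(V,\emptyset)$; for each $u\in V$ in turn (phase $k$): $G^{(k)}:=G^{(k-1)}\cup\delta^+(u)$; $y_u:=\min_{uv\in\delta^+(u)}c_{uv}+\gamma_{uv}y_v$; if $y_u=\infty$ and there is a flow-absorbing cycle $C$ at $u$ in $G^{(k)}$, $y_u:=c(C)/(1-\gamma(C))$. If $y_u<\infty$: set $\bar y_{u'}:=y_u$, $\bar y_v:=y_v$ ($v\in V$), run Grapevine$(G^{(k)}_u,\bar y,u)$ getting $(\bar y,P)$; return INFEASIBLE if an arc of $G^{(k)}_u$ is violated w.r.t. $\bar y$ or $P$ has at least one arc and $\gamma(P)\ge1$. Otherwise run the look-ahead Newton–Dinkelbach method with initial point $\bar y_{u'}$ and supergradient $\gamma(P)-1$ on $f(\delta):=\inf\{c^\top x+\delta\sum_{e\in\delta^-(u)}\gamma_ex_e-\delta: x\in\mathbb{R}^{E(G^{(k)})}_{\ge0},\ x(\delta^+(u))=1,\ \sum_{e\in\delta^+(v)}x_e-\sum_{e\in\delta^-(v)}\gamma_ex_e=0\ \forall v\ne u\}$; its oracle at $\delta$ sets $\bar y_{u'}:=\delta$ and runs Grapevine$(G^{(k)}_u,\bar y,u)$ (updating $\bar y$): $f(\delta)=-\infty$ if an arc remains violated, otherwise $f(\delta)=\bar y_u-\delta$ with supergradient $\gamma(P)-1$ if the returned walk $P$ ends at $u'$ and $-1$ otherwise. The method: from $(\delta^{(i)},g^{(i)})$,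 stop with $\delta^{(i)}$ if $f(\delta^{(i)})=0$; else $\delta:=\delta^{(i)}-f(\delta^{(i)})/g^{(i)}$ with supergradient $g$, NO ROOT if $f(\delta)=-\infty$ or ($f(\delta)<0$, $g\ge0$); try $\delta':=2\delta-\delta^{(i)}$ and use it if $-\infty<f(\delta')<0$ with negative supergradient; continue from the chosen point. If NO ROOT, return INFEASIBLE; else $y:=\bar y|_V$. After all phases return $y$. *)

From HB Require Import structures.
From mathcomp Require Import all_boot all_order all_algebra.
From mathcomp Require Import constructive_ereal.

Set Implicit Arguments.
Unset Strict Implicit.
Unset Printing Implicit Defensive.

Import Order.TTheory GRing.Theory Num.Theory.
Local Open Scope ring_scope.

(* An M2VPI system: node set V (finType, n = #|V|), arc set E (finType; a
   multigraph, parallel arcs and loops allowed), arc e = (tl e, hd e),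
   cost c e, gain gam e > 0; arc e encodes  y_(tl e) - gam e * y_(hd e) <= c e. *)

Inductive result (R : realFieldType) (V : finType) :=
  | Labels of (V -> \bar R)
  | Infeasible.
Arguments Infeasible {R V}.

Section M2VPI.
Variables (R : realFieldType) (V E : finType) (tl hd : E -> V) (c gam : E -> R).

Definition feasible_sol (y : V -> R) : Prop :=
  forall e, y (tl e) - gam e * y (hd e) <= c e.

Definition feasible : Prop := exists y, feasible_sol y.

Definition is_ymax (y : V -> \bar R) : Prop :=
  forall u,
    (forall y', feasible_sol y' -> ((y' u)%:E <= y u)%E) /\
    (forall b : \bar R, (forall y', feasible_sol y' -> ((y' u)%:E <= b)%E) ->
        (y u <= b)%E).

Definition wgain (P : seq E) : R := \prod_(e <- P) gam e.
(* c(P) = sum_i (prod_{j<i} gam e_j) c e_i *)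
Fixpoint wcost (P : seq E) : R :=
  if P is e :: P' then c e + gam e * wcost P' else 0.

Fixpoint is_walk (A : pred E) (v w : V) (P : seq E) : bool :=
  if P is e :: P' then [&& A e, tl e == v & is_walk A (hd e) w P'] else v == w.

(* cycle at u in (V, A): a u-u walk whose intermediate nodes are distinct *)
Definition is_cycle_at (A : pred E) (u : V) (C : seq E) : bool :=
  is_walk A u u C && uniq (map hd (take (size C).-1 C)).

(* ----- the split graph H_u = (V, A)_u on nodes option V; None = u' ----- *)
Section Split.
Variables (A : pred E) (u : V).

Definition sT (e : E) : option V := Some (tl e).
Definition sH (e : E) : option V := if hd e == u then None else Some (hd e).

Definition arcval (y : option V -> \bar R) (e : E) : \bar R :=
  ((c e)%:E + (gam e)%:E * y (sH e))%E.

Definition bestarc (y : option V -> \bar R) (x : option V) : \bar R :=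
  \big[Order.min/+oo%E]_(e | A e && (sT e == x)) arcval y e.

Definition round (y : option V -> \bar R) (x : option V) : \bar R :=
  Order.min (y x) (bestarc y x).

(* walk traced from x backwards in time starting at round i *)
Fixpoint trace (pr : option V -> nat -> option E) (x : option V) (i : nat)
    : seq E :=
  if i is i'.+1 then
    if pr x i is Some e then e :: trace pr (sH e) i' else trace pr x i'
  else [::].

(* Grapevine(H_u, y0, s) returns (y', P); ties broken arbitrarily
   (hence a relation). ys i = labels after round i, pr x i = pred(x, i). *)
Definition grapevine (y0 : option V -> \bar R) (s : option V)
    (y' : option V -> \bar R) (P : seq E) : Prop :=
  exists (ys : nat -> option V -> \bar R) (pr : option V -> nat -> option E),
    [/\ ys 0%N = y0,
        (forall i x, (0 < i <= #|V|)%N -> ys i x = round (ys i.-1) x),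
        (forall i x, (0 < i <= #|V|)%N ->
           if (ys i x < ys i.-1 x)%E then
             exists e, [/\ pr x i = Some e, A e, sT e = x &
                           arcval (ys i.-1) e = ys i x]
           else pr x i = None),
        y' = ys #|V| &
        P = trace pr s #|V|].

Definition violated (y : option V -> \bar R) : bool :=
  [exists e, A e && (arcval y e < y (sT e))%E].

Definition wend (x : option V) (P : seq E) : option V := last x (map sH P).

(* Oracle of the Newton-Dinkelbach method at delta: sets ybar_{u'} := delta,
   runs Grapevine(H_u, ybar, u); returns new labels, f(delta), supergradient. *)
Definition oracle (ybar : option V -> \bar R) (delta : R)
    (ybar' : option V -> \bar R) (fv : \bar R) (g : R) : Prop :=
  exists P,
    [/\ grapevine (fun x => if x is Some _ then ybar x else delta%:E)
                  (Some u) ybar' P,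
        fv = (if violated ybar' then -oo else ybar' (Some u) - delta%:E)%E &
        g = (if wend (Some u) P == None then wgain P - 1 else -1)].

Inductive nresult := Root of (option V -> \bar R) | NoRoot.

(* Look-ahead Newton-Dinkelbach method; state = current labels ybar, current
   point delta, f(delta) (finite), supergradient g. *)
Inductive newton : (option V -> \bar R) -> R -> R -> R -> nresult -> Prop :=
  | nw_stop yb d g : newton yb d 0 g (Root yb)
  | nw_noroot_inf yb d f g yb1 g1 :
      f != 0 -> oracle yb (d - f / g) yb1 -oo%E g1 ->
      newton yb d f g NoRoot
  | nw_noroot_neg yb d f g yb1 f1 g1 :
      f != 0 -> oracle yb (d - f / g) yb1 f1%:E g1 -> f1 < 0 -> 0 <= g1 ->
      newton yb d f g NoRoot
  | nw_accept yb d f g yb1 f1 g1 yb2 f2 g2 res :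
      f != 0 -> oracle yb (d - f / g) yb1 f1%:E g1 -> ~~ ((f1 < 0) && (0 <= g1)) ->
      oracle yb1 (2 * (d - f / g) - d) yb2 f2%:E g2 -> f2 < 0 -> g2 < 0 ->
      newton yb2 (2 * (d - f / g) - d) f2 g2 res ->
      newton yb d f g res
  | nw_reject yb d f g yb1 f1 g1 yb2 fv2 g2 res :
      f != 0 -> oracle yb (d - f / g) yb1 f1%:E g1 -> ~~ ((f1 < 0) && (0 <= g1)) ->
      oracle yb1 (2 * (d - f / g) - d) yb2 fv2 g2 ->
      ~ (exists f2, [/\ fv2 = f2%:E, f2 < 0 & g2 < 0]) ->
      newton yb1 (d - f / g) f1 g1 res ->
      newton yb d f g res.

End Split.

Definition addout (A : pred E) (u : V) : pred E := fun e => A e || (tl e == u).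

Definition minout (y : V -> \bar R) (u : V) : \bar R :=
  \big[Order.min/+oo%E]_(e | tl e == u) ((c e)%:E + (gam e)%:E * y (hd e))%E.

Definition start_label (A : pred E) (y : V -> \bar R) (u : V) (r : R) : Prop :=
  minout y u = r%:E \/
  (minout y u = +oo%E /\
   exists C, [/\ is_cycle_at A u C, wgain C < 1 & r = wcost C / (1 - wgain C)]).

Definition ybar_init (y : V -> \bar R) (u : V) (r : R) : option V -> \bar R :=
  fun x => if x is Some v then (if v == u then r%:E else y v) else r%:E.

(* phases A y s res : starting with processed arcs A (= arcs of G^(k-1)) and
   labels y, processing the nodes of s in turn, the algorithm returns res. *)
Inductive phases : pred E -> (V -> \bar R) -> seq V -> result R V -> Prop :=
  | ph_done A y : phases A y [::] (Labels y)
  | ph_infty A y u s res :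
      minout y u = +oo%E ->
      ~ (exists C, is_cycle_at (addout A u) u C /\ wgain C < 1) ->
      phases (addout A u) (fun v => if v == u then +oo%E else y v) s res ->
      phases A y (u :: s) res
  | ph_gv_infeasible A y u s r yb1 P :
      start_label (addout A u) y u r ->
      grapevine (addout A u) u (ybar_init y u r) (Some u) yb1 P ->
      violated (addout A u) u yb1 || ((0 < size P)%N && (1 <= wgain P)) ->
      phases A y (u :: s) Infeasible
  | ph_noroot A y u s r yb1 P a :
      start_label (addout A u) y u r ->
      grapevine (addout A u) u (ybar_init y u r) (Some u) yb1 P ->
      ~~ (violated (addout A u) u yb1 || ((0 < size P)%N && (1 <= wgain P))) ->
      yb1 (Some u) = a%:E ->
      newton (addout A u) u yb1 r (a - r) (wgain P - 1) NoRoot ->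
      phases A y (u :: s) Infeasible
  | ph_root A y u s r yb1 P a yb res :
      start_label (addout A u) y u r ->
      grapevine (addout A u) u (ybar_init y u r) (Some u) yb1 P ->
      ~~ (violated (addout A u) u yb1 || ((0 < size P)%N && (1 <= wgain P))) ->
      yb1 (Some u) = a%:E ->
      newton (addout A u) u yb1 r (a - r) (wgain P - 1) (Root yb) ->
      phases (addout A u) (fun v => yb (Some v)) s res ->
      phases A y (u :: s) res.

Definition alg3 (s : seq V) (res : result R V) : Prop :=
  phases (fun _ => false) (fun _ => +oo%E) s res.

End M2VPI.

From Pilot Require Import Defs.
From HB Require Import structures.
From mathcomp Require Import all_boot all_order all_algebra.
From mathcomp Require Import constructive_ereal.
From mathcomp Require Import lra zify ring.
Import Order.TTheory GRing.Theory Num.Theory.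
Local Open Scope ring_scope.

Set Implicit Arguments.
Unset Strict Implicit.
Unset Printing Implicit Defensive.

(* Algorithm 3 keeps three invariants on its labels [y] and the set [A] of arcs
   processed so far: [y] dominates every feasible solution, [y] satisfies the
   arcs of [A], and every closed walk of [A] through a node labelled [+oo] has
   gain at least 1.  Grapevine is [|V|] rounds of Bellman-Ford relaxation on
   the split graph [G_u], so every label is the value [c(P) + gam(P) y_w] of a
   walk [P] of at most [|V|] arcs; an arc still violated afterwards would give
   a walk beating all shorter ones, whose cycle contradicts either a feasible
   solution or the invariant at [+oo].  The Newton-Dinkelbach points [d] stay
   above [y'_u] for every feasible [y'], since [f(d)] is the value of the
   traced [u]-[u'] walk; hence each INFEASIBLE answer contradicts a feasible
   solution.  Once all arcs are processed, raising the infinite labels of a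
   feasible [y0] by an arbitrary [K] and relaxing [|V|] rounds yields feasible
   solutions attaining the finite labels and exceeding any bound at the
   infinite ones, so [y = y^max]. *)

Section Affine.
Variable R : realFieldType.

(* For [g >= 1] the solutions of [t <= a + g t] form an up-set, for [g <= 1] a
   down-set; all comparisons of walks with cycles reduce to this. *)
Lemma le_affine_self_up (a g t v : R) :
  1 <= g -> t <= v -> t <= a + g * t -> v <= a + g * v.
Proof. by move=> g1 tv ht; nra. Qed.

Lemma le_affine_self_down (a g t v : R) :
  g <= 1 -> v <= t -> t <= a + g * t -> v <= a + g * v.
Proof. by move=> g1 vt ht; nra. Qed.

Definition aff (a g : R) (z : \bar R) : \bar R := (a%:E + g%:E * z)%E.

Lemma aff_fin a g r : aff a g r%:E = (a + g * r)%:E.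
Proof. by []. Qed.

Lemma aff_pinfty a g : 0 < g -> aff a g +oo%E = +oo%E.
Proof. by move=> g0; rewrite /aff gt0_muley ?lte_fin. Qed.

Lemma aff_ninfty a g : 0 < g -> aff a g -oo%E = -oo%E.
Proof. by move=> g0; rewrite /aff gt0_muleNy ?lte_fin. Qed.

Lemma aff_id z : aff 0 1 z = z.
Proof.
case: z => [r||]; first by rewrite aff_fin add0r mul1r.
- by rewrite aff_pinfty.
- by rewrite aff_ninfty.
Qed.

Lemma aff_comp a g b h z : 0 < g -> 0 < h ->
  aff a g (aff b h z) = aff (a + g * b) (g * h) z.
Proof.
move=> g0 h0; case: z => [r||].
- by rewrite !aff_fin mulrDr addrA mulrA.
- by rewrite !aff_pinfty // mulr_gt0.
- by rewrite !aff_ninfty // mulr_gt0.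
Qed.

Lemma lee_aff2 a g z z' : 0 < g -> (aff a g z <= aff a g z')%E = (z <= z')%E.
Proof.
move=> g0; case: z => [r||]; case: z' => [r'||];
  rewrite ?aff_fin ?aff_pinfty ?aff_ninfty // ?lee_fin ?leey ?leNye //.
by rewrite lerD2l ler_pM2l.
Qed.

Lemma lte_aff2 a g z z' : 0 < g -> (aff a g z < aff a g z')%E = (z < z')%E.
Proof.
move=> g0; case: z => [r||]; case: z' => [r'||];
  rewrite ?aff_fin ?aff_pinfty ?aff_ninfty // ?lte_fin ?ltey ?ltNye //.
by rewrite ltrD2l ltr_pM2l.
Qed.

Lemma aff_eqy a g z : 0 < g -> (aff a g z == +oo%E) = (z == +oo%E).
Proof. by move=> g0; case: z => [r||]; rewrite ?aff_fin ?aff_pinfty ?aff_ninfty. Qed.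

End Affine.

Section Walks.
Variables (R : realFieldType) (N E : finType) (T H : E -> N) (c gam : E -> R).
Hypothesis gam_gt0 : forall e, 0 < gam e.
Local Notation walk := (is_walk T H).

Lemma wgain_nil : wgain gam [::] = 1.
Proof. by rewrite /wgain big_nil. Qed.

Lemma wgain_cons e W : wgain gam (e :: W) = gam e * wgain gam W.
Proof. by rewrite /wgain big_cons. Qed.

Lemma wgain_cat W1 W2 : wgain gam (W1 ++ W2) = wgain gam W1 * wgain gam W2.
Proof. by rewrite /wgain big_cat. Qed.

Lemma wgain_gt0 W : 0 < wgain gam W.
Proof. by rewrite /wgain prodr_gt0. Qed.

Lemma wcost_cat W1 W2 :
  wcost c gam (W1 ++ W2) = wcost c gam W1 + wgain gam W1 * wcost c gam W2.
Proof.
elim: W1 => [|e W1 IH] /=; first by rewrite wgain_nil add0r mul1r.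
by rewrite IH wgain_cons mulrDr addrA mulrA.
Qed.

Lemma wgain_drop_ge1 Q1 D Q2 :
  1 <= wgain gam D -> wgain gam (Q1 ++ Q2) <= wgain gam (Q1 ++ D ++ Q2).
Proof.
move=> D1; rewrite !wgain_cat ler_pM2l ?wgain_gt0 //.
by rewrite -{1}(mul1r (wgain gam Q2)) ler_pM2r ?wgain_gt0.
Qed.

Lemma wgain_ge_expn k W :
  (size W <= k)%N -> (\big[Order.min/1]_e gam e) ^+ k <= wgain gam W.
Proof.
move=> sW; set g := \big[_/_]_e _.
have g_gt0 : 0 < g.
  by apply: (big_ind (fun z => 0 < z)) => // a b a0 b0; rewrite lt_min a0 b0.
have g_le1 : g <= 1 by exact: bigmin_le_id.
apply: le_trans (ler_wiXn2l (ltW g_gt0) g_le1 sW) _.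
elim: W {sW} => [|e W IH]; first by rewrite wgain_nil expr0.
rewrite wgain_cons /= exprS; apply: ler_pM => //; rewrite ?exprn_ge0 ?(ltW g_gt0) //.
exact: bigmin_le.
Qed.

(* The bound [c(W) + gam(W) L(y)] that a walk [W] ending in [y] imposes on
   the label of its first node. *)
Definition wval (L : N -> \bar R) (y : N) (W : seq E) : \bar R :=
  aff (wcost c gam W) (wgain gam W) (L y).

Lemma wval_nil L y : wval L y [::] = L y.
Proof. by rewrite /wval wgain_nil aff_id. Qed.

Lemma wval_cat L y W1 W2 :
  wval L y (W1 ++ W2) = aff (wcost c gam W1) (wgain gam W1) (wval L y W2).
Proof. by rewrite /wval aff_comp ?wgain_gt0 // wcost_cat wgain_cat. Qed.

Lemma wval_cons L y e W : wval L y (e :: W) = aff (c e) (gam e) (wval L y W).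
Proof.
rewrite -cat1s wval_cat /=; congr aff; last by rewrite wgain_cons wgain_nil mulr1.
by rewrite mulr0 addr0.
Qed.

Lemma is_walk_cat (B : pred E) x z W1 W2 :
  walk B x z (W1 ++ W2) =
  walk B x (last x (map H W1)) W1 && walk B (last x (map H W1)) z W2.
Proof.
elim: W1 x => [|e W1 IH] x /=; first by rewrite eqxx.
by rewrite IH !andbA.
Qed.

Lemma is_walk_last (B : pred E) x y W : walk B x y W -> y = last x (map H W).
Proof.
elim: W x => [|e W IH] x /=; first by move/eqP.
by case/and3P => _ _ /IH.
Qed.

Lemma is_walk_rcons (B : pred E) x z W e :
  walk B x z (rcons W e) = [&& walk B x (T e) W, B e & H e == z].
Proof.
rewrite -cats1 is_walk_cat /=; apply/andP/and3P => [[wW /and3P[-> /eqP te ->]]|].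
  by rewrite te.
by case=> wW -> ->; rewrite -(is_walk_last wW) wW eqxx.
Qed.

Lemma is_walk_restrict (B B' : pred E) x y W :
  walk B x y W -> (forall e, e \in W -> B e -> B' e) -> walk B' x y W.
Proof.
elim: W x => [|e W IH] x //= /and3P[Be -> wW] BB'.
rewrite BB' ?mem_head //=; apply: IH => // f fW; apply: BB'.
by rewrite inE fW orbT.
Qed.

Lemma is_walk_tails (B : pred E) x z W e :
  walk B x z W -> e \in W -> T e \in x :: map H W.
Proof.
elim: W x => [|f W IH] x //= /and3P[_ /eqP tx wW].
rewrite inE => /orP[/eqP ->|eW]; first by rewrite tx mem_head.
by have := IH _ wW eW; rewrite !inE => /orP[->|->]; rewrite ?orbT.
Qed.

Lemma is_walk_closed_tails (B : pred E) w D e :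
  walk B w w D -> e \in D -> T e \in map H D.
Proof.
move=> wD eD; have := is_walk_tails wD eD; rewrite inE => /orP[/eqP ->|//].
rewrite {1}(is_walk_last wD); case: D wD eD => [//|f D] _ _ /=.
exact: mem_last.
Qed.

Lemma sat_le_wval (B : pred E) (L : N -> \bar R) x y W :
  (forall e, B e -> (L (T e) <= aff (c e) (gam e) (L (H e)))%E) ->
  walk B x y W -> (L x <= wval L y W)%E.
Proof.
move=> satL; elim: W x => [|e W IH] x /=; first by move/eqP->; rewrite wval_nil.
case/and3P => Be /eqP <- wW; rewrite wval_cons.
by apply: le_trans (satL _ Be) _; rewrite lee_aff2 // IH.
Qed.

Lemma sat_le_wcost (B : pred E) (z : N -> R) x y W :
  (forall e, B e -> z (T e) <= c e + gam e * z (H e)) ->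
  walk B x y W -> z x <= wcost c gam W + wgain gam W * z y.
Proof.
move=> satz wW; rewrite -lee_fin -aff_fin.
apply: (sat_le_wval (L := fun v => (z v)%:E)) wW => e Be.
by rewrite aff_fin lee_fin satz.
Qed.

Lemma lb_le_wval (B : pred E) (z : N -> R) (L : N -> \bar R) x y W :
  (forall e, B e -> z (T e) <= c e + gam e * z (H e)) ->
  (forall v, ((z v)%:E <= L v)%E) ->
  walk B x y W -> ((z x)%:E <= wval L y W)%E.
Proof.
move=> satz zL wW.
apply: (@le_trans _ _ (aff (wcost c gam W) (wgain gam W) (z y)%:E)).
  by rewrite aff_fin lee_fin (sat_le_wcost satz wW).
by rewrite lee_aff2 ?wgain_gt0.
Qed.

Lemma is_walk_prefix (B : pred E) x0 y x W : x \in map H W -> walk B x0 y W ->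
  exists W1 W2, [/\ W = W1 ++ W2, W1 != [::], walk B x0 x W1 & walk B x y W2].
Proof.
elim: W x0 => [|e W IH] x0 //=; rewrite inE => xW /and3P[Be /eqP te wW].
case: (eqVneq x (H e)) => [xe|xne].
  by exists [:: e], W; rewrite /= Be te xe !eqxx wW.
move: xW; rewrite (negPf xne) /= => xW.
have [W1 [W2 [-> _ w1 w2]]] := IH _ xW wW.
by exists (e :: W1), W2; rewrite /= Be te eqxx w1 w2.
Qed.

Lemma is_walk_cycle (B : pred E) x y W : walk B x y W -> ~~ uniq (x :: map H W) ->
  exists Q1 C Q2 w, [/\ W = Q1 ++ C ++ Q2, C != [::], walk B x w Q1,
                        walk B w w C & walk B w y Q2].
Proof.
elim: W x => [|e W IH] x //=.
case/and3P => Be /eqP te wW; rewrite negb_and negbK => /orP[xW|nuW].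
  have wW' : walk B x y (e :: W) by rewrite /= Be te eqxx wW.
  have [W1 [W2 [eW n1 w1 w2]]] := @is_walk_prefix B x y x (e :: W) xW wW'.
  by exists [::], W1, W2, x; rewrite /= eW eqxx.
have [Q1 [C [Q2 [w [-> nC w1 wC w2]]]]] := IH _ wW nuW.
by exists (e :: Q1), C, Q2, w; rewrite /= Be te eqxx w1.
Qed.

Lemma improving_walk_cycle (B : pred E) (L : N -> \bar R) m x y W :
  (#|N| <= m.+1)%N -> walk B x y W -> (size W <= m.+1)%N ->
  (forall y' W', walk B x y' W' -> (size W' <= m)%N ->
     (wval L y W < wval L y' W')%E) ->
  exists w C Q, [/\ C != [::], walk B w w C, walk B w y Q,
    (aff (wcost c gam C) (wgain gam C) (wval L y Q) < wval L y Q)%E &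
    (wval L y Q <= L w)%E].
Proof.
move=> Nm wW sW improving.
have nuW : ~~ uniq (x :: map H W).
  apply/negP => /card_uniqP; rewrite /= size_map => cardW.
  have : (size W <= m)%N by rewrite -ltnS -cardW (leq_trans (max_card _) Nm).
  by move/(improving _ _ wW); rewrite ltxx.
have [Q1 [C [Q [w [eW nC w1 wC wQ]]]]] := is_walk_cycle wW nuW.
have {}sW : (size Q1 + size C + size Q <= m.+1)%N by rewrite eW !size_cat addnA in sW.
have nC0 : (0 < size C)%N by rewrite lt0n size_eq0.
exists w, C, Q; split => //.
  have w1Q : walk B x y (Q1 ++ Q) by rewrite is_walk_cat -(is_walk_last w1) w1.
  have s1Q : (size (Q1 ++ Q) <= m)%N by rewrite size_cat; lia.
  by have := improving _ _ w1Q s1Q; rewrite eW !wval_cat lte_aff2 ?wgain_gt0.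
case: (eqVneq Q [::]) => [Q0|nQ].
  by move: wQ; rewrite Q0 /= => /eqP ->; rewrite wval_nil.
have w1C : walk B x w (Q1 ++ C) by rewrite is_walk_cat -(is_walk_last w1) w1.
have nQ0 : (0 < size Q)%N by rewrite lt0n size_eq0.
have s1C : (size (Q1 ++ C) <= m)%N by rewrite size_cat; lia.
have := improving _ _ w1C s1C; rewrite eW -[Q1 ++ C]cats0 -catA !wval_cat wval_nil.
by rewrite !lte_aff2 ?wgain_gt0 // => /ltW.
Qed.

Definition relax (B : pred E) (L : N -> \bar R) (x : N) : \bar R :=
  Order.min (L x)
    (\big[Order.min/+oo%E]_(e | B e && (T e == x)) aff (c e) (gam e) (L (H e))).

Lemma relax_le (B : pred E) L x : (relax B L x <= L x)%E.
Proof. by rewrite /relax ge_min lexx. Qed.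

Lemma relax_le_arc (B : pred E) L e :
  B e -> (relax B L (T e) <= aff (c e) (gam e) (L (H e)))%E.
Proof.
by move=> Be; rewrite /relax ge_min bigmin_le_cond ?orbT // Be eqxx.
Qed.

Lemma relaxP (B : pred E) L x :
  relax B L x = L x \/
  exists e, [/\ B e, T e = x & relax B L x = aff (c e) (gam e) (L (H e))].
Proof.
rewrite /relax; set m := \big[_/_]_(e | _) _.
have [->|[e [Be te ->]]] : m = +oo%E \/
    exists e, [/\ B e, T e = x & m = aff (c e) (gam e) (L (H e))].
- apply: (big_ind (fun z => z = +oo%E \/
    exists e, [/\ B e, T e = x & z = aff (c e) (gam e) (L (H e))])) => //.
  + by left.
  + by move=> z1 z2 h1 h2; case: leP.
  + by move=> e /andP[Be /eqP te]; right; exists e.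
- by left; apply/min_idPl; rewrite leey.
- by case: leP => _; [left|right; exists e].
Qed.

Section Rounds.
Variables (B : pred E) (m : nat) (Ls : nat -> N -> \bar R).
Hypothesis Ls_succ : forall i x, (i < m)%N -> Ls i.+1 x = relax B (Ls i) x.

Lemma rounds_le0 i x : (i <= m)%N -> (Ls i x <= Ls 0 x)%E.
Proof.
elim: i x => [|i IH] x im //.
by rewrite Ls_succ // (le_trans (relax_le _ _ _)) // IH // ltnW.
Qed.

Lemma rounds_le_wval i x y W : (i <= m)%N -> walk B x y W -> (size W <= i)%N ->
  (Ls i x <= wval (Ls 0) y W)%E.
Proof.
elim: i x y W => [|i IH] x y W im.
  by case: W => [|//] /= /eqP -> _; rewrite wval_nil.
move=> wW; rewrite leq_eqVlt => /orP[/eqP sW|sW].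
  case: W sW wW => [//|e W] [sW] /= /and3P[Be /eqP <- wW].
  rewrite Ls_succ // wval_cons // (le_trans (relax_le_arc _ Be)) // lee_aff2 //.
  by apply: IH; rewrite ?sW // ltnW.
rewrite Ls_succ // (le_trans (relax_le _ _ _)) //.
by apply: IH => //; exact: ltnW.
Qed.

Lemma rounds_wval i x : (i <= m)%N ->
  exists y W, [/\ walk B x y W, (size W <= i)%N & Ls i x = wval (Ls 0) y W].
Proof.
elim: i x => [|i IH] x im.
  by exists x, [::]; rewrite wval_nil /= eqxx.
rewrite Ls_succ //; case: (relaxP B (Ls i) x) => [->|[e [Be te ->]]].
  have [y [W [wW sW ->]]] := IH x (ltnW im).
  by exists y, W; rewrite (leq_trans sW).
have [y [W [wW sW ->]]] := IH (H e) (ltnW im).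
by exists y, (e :: W); rewrite wval_cons //= Be te eqxx wW.
Qed.

Lemma rounds_lb (z : N -> R) i x : (i <= m)%N ->
  (forall e, B e -> z (T e) <= c e + gam e * z (H e)) ->
  (forall v, ((z v)%:E <= Ls 0 v)%E) -> ((z x)%:E <= Ls i x)%E.
Proof.
move=> im satz zL; have [y [W [wW _ ->]]] := rounds_wval x im.
exact: lb_le_wval satz zL wW.
Qed.

(* Bellman-Ford: after [#|N| - 1] rounds a violated arc would extend a walk of
   minimal value, and the cycle that this longer walk must contain contradicts
   either the lower bound [z] or the hypothesis on closed walks. *)
Lemma rounds_sat (z : N -> R) e :
  (#|N| <= m.+1)%N ->
  (forall e, B e -> z (T e) <= c e + gam e * z (H e)) ->
  (forall v, ((z v)%:E <= Ls 0 v)%E) ->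
  (forall w C, C != [::] -> walk B w w C ->
     1 <= wgain gam C \/
     exists l, Ls 0 w = l%:E /\ l <= wcost c gam C + wgain gam C * l) ->
  B e -> (Ls m (T e) <= aff (c e) (gam e) (Ls m (H e)))%E.
Proof.
move=> Nm satz zL closed Be; rewrite leNgt; apply/negP => viol.
have [y [W [wW sW eW]]] := rounds_wval (H e) (leqnn m).
have weW : walk B (T e) y (e :: W) by rewrite /= Be eqxx.
have improving y' W' : walk B (T e) y' W' -> (size W' <= m)%N ->
    (wval (Ls 0) y (e :: W) < wval (Ls 0) y' W')%E.
  move=> wW' sW'; rewrite wval_cons // -eW.
  exact: lt_le_trans viol (rounds_le_wval (leqnn m) wW' sW').
have [w [C [Q [nC wC wQ ltC leQ]]]] :=
  improving_walk_cycle Nm weW sW improving.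
have zQ := lb_le_wval satz zL wQ.
move: ltC leQ zQ; case: (wval (Ls 0) y Q) => [v||]; last first.
- by [].
- by rewrite aff_pinfty ?wgain_gt0 // ltxx.
rewrite aff_fin lte_fin !lee_fin => ltC leQ zQ.
have [g1|g1] := leP 1 (wgain gam C).
  have := le_affine_self_up g1 zQ (sat_le_wcost satz wC).
  by rewrite leNgt ltC.
have [|[l [el hl]]] := closed w C nC wC; first by rewrite leNgt g1.
move: leQ; rewrite el lee_fin => leQ.
by have := le_affine_self_down (ltW g1) leQ hl; rewrite leNgt ltC.
Qed.

End Rounds.
End Walks.

Section SplitGraph.
Variables (R : realFieldType) (V E : finType) (tl hd : E -> V) (c gam : E -> R).
Hypothesis gam_gt0 : forall e, 0 < gam e.
Variables (B : pred E) (u : V).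

Local Notation sT := (sT tl).
Local Notation sH := (sH hd u).
Local Notation swalk := (is_walk sT sH B).
Local Notation n := #|V|.

Lemma sH_neq e : sH e != Some u.
Proof. by rewrite /Defs.sH; case: (hd e =P u) => // hne; apply/eqP => -[]. Qed.

Lemma last_sH_neq x W : x != Some u -> last x (map sH W) != Some u.
Proof. by elim: W x => [|e W IH] x //= _; apply: IH; exact: sH_neq. Qed.

Lemma split_walk_lift x y W : swalk x y W -> x != Some u -> y != None ->
  exists x' y', [/\ x = Some x', y = Some y', is_walk tl hd B x' y' W &
                  forall e, e \in W -> (tl e != u) && (hd e != u)].
Proof.
elim: W x => [|e W IH] x /=.
  by move=> /eqP -> _; case: y => [y'|//] _; exists y', y'; rewrite /= eqxx.
case/and3P => Be /eqP <- wW tlu yN.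
have tle : tl e != u by apply: contraNneq tlu => <-.
have hdN : sH e != None.
  apply: contra_neq yN => hN; move: wW; rewrite hN.
  by case: W {IH} => [/eqP|f W] //=; rewrite andbF.
have [x' [y' [ex -> wW' Wu]]] := IH _ wW (sH_neq e) yN.
move: ex hdN; rewrite /Defs.sH; case: (hd e =P u) => [//|/eqP hde] [ex] _.
exists (tl e), y'; split => //=; first by rewrite Be eqxx ex.
by move=> f; rewrite inE => /orP[/eqP ->|/Wu //]; rewrite tle hde.
Qed.

Lemma feasible_sol_arc y e :
  feasible_sol tl hd c gam y -> y (tl e) <= c e + gam e * y (hd e).
Proof. by move=> Fy; have := Fy e; rewrite lerBlDr addrC. Qed.

Definition split_sol (y : V -> R) (x : option V) : R :=
  if x is Some v then y v else y u.

Lemma split_sol_arc y e : feasible_sol tl hd c gam y ->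
  split_sol y (sT e) <= c e + gam e * split_sol y (sH e).
Proof.
by move=> Fy; rewrite /split_sol /Defs.sH /=; case: (hd e =P u) => [<-|_];
  exact: feasible_sol_arc.
Qed.

Lemma split_sol_le_wcost y x z W : feasible_sol tl hd c gam y -> swalk x z W ->
  split_sol y x <= wcost c gam W + wgain gam W * split_sol y z.
Proof.
by move=> Fy wW; apply: (sat_le_wcost gam_gt0 _ wW) => e _; exact: split_sol_arc.
Qed.

Section GrapevineRounds.
Variables (ys : nat -> option V -> \bar R) (pr : option V -> nat -> option E).
Hypothesis ys_round : forall i x, (0 < i <= n)%N ->
  ys i x = round tl hd c gam B u (ys i.-1) x.
Hypothesis pr_round : forall i x, (0 < i <= n)%N ->
  if (ys i x < ys i.-1 x)%E then
    exists e, [/\ pr x i = Some e, B e, sT e = x &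
                  arcval hd c gam u (ys i.-1) e = ys i x]
  else pr x i = None.

Lemma ys_succ i x : (i < n)%N -> ys i.+1 x = relax sT sH c gam B (ys i) x.
Proof. by move=> lt; rewrite ys_round //= ltnS ltnW. Qed.

Lemma ys_le0 i x : (i <= n)%N -> (ys i x <= ys 0 x)%E.
Proof. by apply: (rounds_le0 ys_succ). Qed.

Lemma ys_sink i : (i <= n)%N -> ys i None = ys 0 None.
Proof.
elim: i => [//|i IH] lt; rewrite ys_succ //.
by case: (relaxP sT sH c gam B (ys i) None) => [->|[e []//]]; rewrite IH // ltnW.
Qed.

(* The label of the end of the traced walk never decreased, so the last arc
   of a nonempty traced walk was already violated by the initial labels. *)
Lemma trace_walk i x : (i <= n)%N ->
  let P := trace hd u pr x i in
  [/\ swalk x (wend hd u x P) P, (size P <= i)%N,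
      ys i x = wval c gam (ys 0) (wend hd u x P) P,
      P != [::] -> (ys i x < ys 0 x)%E &
      P != [::] -> exists e, [/\ B e, sH e = wend hd u x P &
                     (arcval hd c gam u (ys 0) e < ys 0 (sT e))%E]].
Proof.
elim: i x => [|i IH] x lt /=.
  by split => //; rewrite ?eqxx ?wval_nil.
have := @pr_round i.+1 x; rewrite /= lt => /(_ isT).
case: (pr x i.+1) => [e|]; last first.
  case: ifP => [_ [e [//]]|nlt _].
  have eq1 : ys i.+1 x = ys i x.
    by apply/eqP; rewrite eq_le ys_succ ?relax_le // leNgt -ys_succ ?nlt.
  have [w1 s1 v1 d1 e1] := IH x (ltnW lt).
  by split; rewrite ?eq1 // (leq_trans s1).
case: ifP => [ltx [e' [[<-] Be te ae]]|//].
have [w1 s1 v1 d1 e1] := IH (sH e) (ltnW lt).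
set P' := trace hd u pr (sH e) i in w1 s1 v1 d1 e1 *.
have lt0 : (ys i.+1 x < ys 0 x)%E by apply: lt_le_trans ltx (ys_le0 _ (ltnW lt)).
split => //.
- by rewrite /= Be te eqxx.
- by rewrite -ae /arcval wval_cons // /wend /= -/(wend hd u _ _) -v1.
- move=> _; case: (eqVneq P' [::]) => [P0|/e1 //].
  exists e; split => //; first by rewrite /wend /= P0.
  move: v1; rewrite P0 wval_nil => v1.
  have -> : arcval hd c gam u (ys 0) e = ys i.+1 x by rewrite -ae /arcval v1.
  by rewrite te.
Qed.

Lemma rounds_not_violated (ystar : V -> R) :
  feasible_sol tl hd c gam ystar ->
  (forall v, ((ystar v)%:E <= ys 0 (Some v))%E) -> ((ystar u)%:E <= ys 0 None)%E ->
  (forall e, B e -> tl e != u -> hd e != u ->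
     (ys 0 (Some (tl e)) <= aff (c e) (gam e) (ys 0 (Some (hd e))))%E) ->
  (forall z C, C != [::] -> is_walk tl hd B z z C ->
     (forall e, e \in C -> (tl e != u) && (hd e != u)) ->
     ys 0 (Some z) = +oo%E -> 1 <= wgain gam C) ->
  ~~ violated tl hd c gam B u (ys n).
Proof.
move=> feas lbS lbN sat0 closed.
pose z := split_sol ystar.
have satz e : B e -> z (sT e) <= c e + gam e * z (sH e).
  by move=> _; exact: split_sol_arc.
have zL x : ((z x)%:E <= ys 0 x)%E by case: x.
have Nm : (#|{: option V}| <= n.+1)%N by rewrite card_option.
have closed' w C : C != [::] -> swalk w w C ->
    1 <= wgain gam C \/
    exists l, ys 0 w = l%:E /\ l <= wcost c gam C + wgain gam C * l.
  move=> nC wC.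
  have wN : w != None by case: C nC wC => [//|f C] _ /= /and3P[_ /eqP <-].
  have wu : w != Some u.
    rewrite (is_walk_last wC); case: C nC wC => [//|f C] _ _ /=.
    exact: last_sH_neq (sH_neq f).
  have [z' [_ [-> [<-] wC' Cu]]] := split_walk_lift wC wu wN.
  case E0: (ys 0 (Some z')) => [l||].
  - right; exists l; split => //.
    pose B' e := [&& B e, tl e != u & hd e != u].
    have wB'C : is_walk tl hd B' z' z' C.
      by apply: is_walk_restrict wC' _ => f fC Bf; rewrite /B' Bf Cu.
    have sat0' e : B' e ->
        (ys 0 (Some (tl e)) <= aff (c e) (gam e) (ys 0 (Some (hd e))))%E.
      by case/and3P; exact: sat0.
    have := sat_le_wval (L := fun v => ys 0 (Some v)) gam_gt0 sat0' wB'C.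
    by rewrite /wval E0 aff_fin lee_fin.
  - by left; exact: closed z' C nC wC' Cu E0.
  - by have := lbS z'; rewrite E0.
apply/existsP => -[e /andP[Be viol]].
by have := rounds_sat gam_gt0 ys_succ Nm satz zL closed' Be; rewrite leNgt viol.
Qed.

End GrapevineRounds.

Section Grapevine.
Variables (L0 yb : option V -> \bar R) (P : seq E).
Hypothesis gv : grapevine tl hd c gam B u L0 (Some u) yb P.

Lemma grapevine_sink : yb None = L0 None.
Proof. by case: gv => ys [pr [<- ys_round _ -> _]]; exact: ys_sink. Qed.

Lemma grapevine_le x : (yb x <= L0 x)%E.
Proof. by case: gv => ys [pr [<- ys_round _ -> _]]; exact: ys_le0. Qed.

Lemma grapevine_le_wval x y W : swalk x y W -> (size W <= n)%N ->
  (yb x <= wval c gam L0 y W)%E.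
Proof.
case: gv => ys [pr [<- ys_round _ -> _]].
exact: (rounds_le_wval gam_gt0 (ys_succ ys_round) (leqnn n)).
Qed.

Lemma grapevine_trace :
  [/\ swalk (Some u) (wend hd u (Some u) P) P, (size P <= n)%N,
      yb (Some u) = wval c gam L0 (wend hd u (Some u) P) P,
      P != [::] -> (yb (Some u) < L0 (Some u))%E &
      P != [::] -> exists e, [/\ B e, sH e = wend hd u (Some u) P &
                     (arcval hd c gam u L0 e < L0 (sT e))%E]].
Proof.
case: gv => ys [pr [<- ys_round pr_round -> ->]].
exact: (trace_walk ys_round pr_round (Some u) (leqnn n)).
Qed.

Lemma grapevine_lb (z : option V -> R) :
  (forall e, B e -> z (sT e) <= c e + gam e * z (sH e)) ->
  (forall x, ((z x)%:E <= L0 x)%E) -> forall x, ((z x)%:E <= yb x)%E.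
Proof.
case: gv => ys [pr [<- ys_round _ -> _]] satz zL x.
exact: (rounds_lb gam_gt0 (ys_succ ys_round) x (leqnn n) satz zL).
Qed.

Lemma grapevine_not_violated (ystar : V -> R) :
  feasible_sol tl hd c gam ystar ->
  (forall v, ((ystar v)%:E <= L0 (Some v))%E) -> ((ystar u)%:E <= L0 None)%E ->
  (forall e, B e -> tl e != u -> hd e != u ->
     (L0 (Some (tl e)) <= aff (c e) (gam e) (L0 (Some (hd e))))%E) ->
  (forall z C, C != [::] -> is_walk tl hd B z z C ->
     (forall e, e \in C -> (tl e != u) && (hd e != u)) ->
     L0 (Some z) = +oo%E -> 1 <= wgain gam C) ->
  ~~ violated tl hd c gam B u yb.
Proof.
by case: gv => ys [pr [<- ys_round pr_round -> _]]; exact: rounds_not_violated.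
Qed.

End Grapevine.
End SplitGraph.

Section Algorithm.
Variables (R : realFieldType) (V E : finType) (tl hd : E -> V) (c gam : E -> R).
Hypothesis gam_gt0 : forall e, 0 < gam e.

Local Notation F := (feasible_sol tl hd c gam).
Local Notation n := #|V|.
Local Notation sT := (sT tl).

Definition upper_bound (y : V -> \bar R) : Prop :=
  forall y', F y' -> forall v, ((y' v)%:E <= y v)%E.

Definition sat_arcs (A : pred E) (y : V -> \bar R) : Prop :=
  forall e, A e -> (y (tl e) <= aff (c e) (gam e) (y (hd e)))%E.

Definition no_absorbing_at_infty (A : pred E) (y : V -> \bar R) : Prop :=
  forall x C, is_walk tl hd A x x C -> y x = +oo%E -> 1 <= wgain gam C.

Definition with_sink (yb : option V -> \bar R) (d : R) : option V -> \bar R :=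
  fun x => if x is Some _ then yb x else d%:E.

Section Phase.
Variables (A : pred E) (u : V) (y : V -> \bar R).
Hypothesis y_noabs : no_absorbing_at_infty A y.

Local Notation B := (addout tl A u).
Local Notation sH := (sH hd u).
Local Notation swalk := (is_walk sT sH B).

Lemma closed_walk_avoiding_u z C : C != [::] -> is_walk tl hd B z z C ->
  (forall e, e \in C -> (tl e != u) && (hd e != u)) ->
  z != u /\ is_walk tl hd A z z C.
Proof.
move=> nC wC Cu; split.
  case: C nC wC Cu => [//|f C] _ /= /and3P[_ /eqP <- _] /(_ f (mem_head _ _)).
  by case/andP.
apply: is_walk_restrict wC _ => f fC; rewrite /addout => /orP[//|/eqP tf].
by have := Cu f fC; rewrite tf eqxx.
Qed.

Section Oracle.
Variables (yb yb' : option V -> \bar R) (d : R) (P : seq E).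
Hypothesis gv : grapevine tl hd c gam B u (with_sink yb d) (Some u) yb' P.
Hypothesis yb_ub : forall y', F y' -> forall v, ((y' v)%:E <= yb (Some v))%E.
Hypothesis d_ub : forall y', F y' -> y' u <= d.

Lemma oracle_labels_ub y' : F y' -> forall v, ((y' v)%:E <= yb' (Some v))%E.
Proof.
move=> Fy' v; apply: (grapevine_lb gam_gt0 gv (z := split_sol u y') _ _ (Some v)).
  by move=> e _; exact: split_sol_arc.
by case=> [w|] /=; [exact: yb_ub|rewrite lee_fin d_ub].
Qed.

Lemma oracle_labels_sat : feasible tl hd c gam ->
  ~~ violated tl hd c gam B u yb ->
  (forall z, z != u -> (yb (Some z) <= y z)%E) ->
  ~~ violated tl hd c gam B u yb'.
Proof.
move=> [y0 Fy0] yb_sat yb_le.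
apply: (grapevine_not_violated gam_gt0 gv Fy0).
- exact: yb_ub.
- by rewrite /= lee_fin d_ub.
- move=> e Be tle hde; apply: contraNle yb_sat => viol.
  by apply/existsP; exists e; rewrite Be /= /arcval /Defs.sH (negPf hde).
- move=> z C nC wC Cu ybz.
  have [zu wAC] := closed_walk_avoiding_u nC wC Cu.
  by apply: y_noabs wAC _; apply/eqP; rewrite -leye_eq -ybz yb_le.
Qed.

End Oracle.

Lemma oracle_fin yb d yb' f' g' :
  oracle tl hd c gam B u yb d yb' f'%:E g' ->
  [/\ ~~ violated tl hd c gam B u yb' /\ yb' None = d%:E,
      yb' (Some u) = (d + f')%:E,
      (forall v, (yb' (Some v) <= yb (Some v))%E),
      (forall Q, swalk (Some u) None Q -> (size Q <= n)%N ->
         (yb' (Some u) <= (wcost c gam Q + wgain gam Q * d)%:E)%E) &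
      (g' = -1 /\ exists z Q, swalk (Some u) (Some z) Q /\
          yb' (Some u) = aff (wcost c gam Q) (wgain gam Q) (yb (Some z))) \/
      (exists Q, [/\ swalk (Some u) None Q, (size Q <= n)%N,
          g' = wgain gam Q - 1 & d + f' = wcost c gam Q + wgain gam Q * d])].
Proof.
case=> P [gv fv_def g_def].
have sat' : ~~ violated tl hd c gam B u yb'.
  by apply/negP => viol; rewrite viol in fv_def.
rewrite (negPf sat') in fv_def.
have yb'u : yb' (Some u) = (d + f')%:E.
  move: fv_def; case: (yb' (Some u)) => [r||] //.
  by rewrite -EFinB => -[->]; rewrite addrC subrK.
have [wP sP vP _ _] := grapevine_trace gam_gt0 gv.
split => //.
- by rewrite (grapevine_sink gv).
- by move=> v; exact: (grapevine_le gv (Some v)).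
- by move=> Q wQ sQ; exact: (grapevine_le_wval gam_gt0 gv wQ sQ).
case: (wend hd u (Some u) P) wP vP g_def => [z|] wP vP g_def.
  by left; split => //; exists z, P.
right; exists P; split => //.
by move: vP; rewrite yb'u /wval aff_fin => -[].
Qed.

Lemma oracle_finite yb d yb' g' :
  oracle tl hd c gam B u yb d yb' -oo%E g' ->
  (forall y', F y' -> forall v, ((y' v)%:E <= yb (Some v))%E) ->
  ~~ violated tl hd c gam B u yb ->
  (forall z, z != u -> (yb (Some z) <= y z)%E) ->
  feasible tl hd c gam -> (forall y', F y' -> y' u <= d) -> False.
Proof.
case=> P [gv fv_def _] yb_ub yb_sat yb_le [y0 Fy0] d_ub.
have := oracle_labels_sat gv yb_ub d_ub (ex_intro _ y0 Fy0) yb_sat yb_le.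
move/negPf => sat'; rewrite sat' in fv_def.
have := oracle_labels_ub gv yb_ub d_ub Fy0 u.
by move: fv_def; case: (yb' (Some u)).
Qed.

(* The state of the look-ahead Newton-Dinkelbach method at the point [d]:
   [f = f(d)] and [g] is the supergradient, certified by the walk to [u'] that
   Grapevine traced (or [g = -1]). *)
Record newton_inv (yb : option V -> \bar R) (d f g : R) : Prop := {
  ninv_ub : forall y', F y' -> forall v, ((y' v)%:E <= yb (Some v))%E;
  ninv_d_ub : forall y', F y' -> y' u <= d;
  ninv_sat : ~~ violated tl hd c gam B u yb;
  ninv_sink : yb None = d%:E;
  ninv_u : yb (Some u) = (d + f)%:E;
  ninv_f : f <= 0;
  ninv_g : f = 0 \/ g = -1 \/ exists P, [/\ swalk (Some u) None P,
           (size P <= n)%N, g = wgain gam P - 1 &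
           d + f = wcost c gam P + wgain gam P * d];
  ninv_le : forall z, z != u -> (yb (Some z) <= y z)%E }.

Lemma le_wcost_sink y' Q : F y' -> swalk (Some u) None Q ->
  y' u <= wcost c gam Q + wgain gam Q * y' u.
Proof. exact: split_sol_le_wcost. Qed.

Lemma newton_step_ub yb d f g : newton_inv yb d f g -> f != 0 ->
  forall y', F y' -> y' u <= d - f / g.
Proof.
move=> Ni f0 y' Fy'.
have fneg : f < 0 by rewrite lt_neqAle f0 (ninv_f Ni).
case: (ninv_g Ni) => [/eqP|[->|[P [wP _ ->]]]]; first by rewrite (negPf f0).
  by have := ninv_ub Ni Fy' u; rewrite (ninv_u Ni) lee_fin invrN1 mulrN1 opprK.
have hP := le_wcost_sink Fy' wP; have yd := ninv_d_ub Ni Fy'.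
set gP := wgain gam P in hP *; set cP := wcost c gam P in hP * => ef.
have gP1 : gP < 1.
  rewrite ltNge; apply/negP => g1.
  by have := le_affine_self_up g1 yd hP; rewrite -ef; lra.
have -> : d - f / (gP - 1) = cP / (1 - gP).
  have -> : f = cP + gP * d - d by lra.
  by field; rewrite !subr_eq0 (gt_eqF gP1) eq_sym (gt_eqF gP1).
by rewrite ler_pdivlMr ?subr_gt0 //; nra.
Qed.

(* [d - f / g] is the fixed point of the affine map of the current walk to
   [u'], which bounds the new label of [u]; hence [f(d - f / g) <= 0]. *)
Lemma newton_step_le0 yb d f g yb1 f1 g1 : newton_inv yb d f g -> f != 0 ->
  oracle tl hd c gam B u yb (d - f / g) yb1 f1%:E g1 -> f1 <= 0.
Proof.
move=> Ni f0 ho; have [_ yb1u yb1_le yb1_walk _] := oracle_fin ho.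
case: (ninv_g Ni) => [/eqP|[g1'|[P [wP sP eg ed]]]]; first by rewrite (negPf f0).
  have := yb1_le u; rewrite yb1u (ninv_u Ni) lee_fin g1' invrN1 mulrN1 opprK; lra.
have := yb1_walk P wP sP; rewrite yb1u lee_fin.
set gP := wgain gam P in eg ed *; set cP := wcost c gam P in ed *.
have [g0|gn0] := eqVneq g 0.
  move: eg (ninv_f Ni); rewrite g0 invr0 mulr0 subr0 => /eqP; rewrite eq_sym subr_eq0.
  by move/eqP => gP1; move: ed; rewrite gP1 !mul1r; lra.
have -> : cP + gP * (d - f / g) = d - f / g.
  have -> : f = cP + gP * d - d by lra.
  by rewrite eg; field; rewrite -eg.
lra.
Qed.

Lemma newton_inv_step yb d f g d' yb' f' g' : newton_inv yb d f g ->
  (forall y', F y' -> y' u <= d') ->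
  oracle tl hd c gam B u yb d' yb' f'%:E g' -> f' <= 0 -> newton_inv yb' d' f' g'.
Proof.
move=> Ni d'_ub ho f'0; have [[sat' sink'] yb'u yb'_le _ g'_def] := oracle_fin ho.
split => //.
- by case: ho => P [gv _ _]; exact: oracle_labels_ub gv (ninv_ub Ni) d'_ub.
- by case: g'_def => [[-> _]|[Q [wQ sQ eg ed]]]; [right; left|right; right; exists Q].
- by move=> z zu; apply: le_trans (yb'_le z) (ninv_le Ni zu).
Qed.

(* If [g' < 0], the traced walk ends at a node of [G] or has gain below 1;
   either way [f(d') < 0] keeps [y'_u] below [d']. *)
Lemma lookahead_ub yb d f g d' yb' f' g' : newton_inv yb d f g ->
  oracle tl hd c gam B u yb d' yb' f'%:E g' -> f' < 0 -> g' < 0 ->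
  forall y', F y' -> y' u <= d'.
Proof.
move=> Ni ho f'0 g'0 y' Fy'.
have [_ yb'u _ _ [[_ [z [Q [wQ eQ]]]]|[Q [wQ _ eg ed]]]] := oracle_fin ho.
  have hQ := split_sol_le_wcost gam_gt0 Fy' wQ.
  have := ninv_ub Ni Fy' z.
  rewrite -(lee_aff2 (wcost c gam Q) _ _ (wgain_gt0 gam_gt0 Q)) -eQ yb'u aff_fin lee_fin.
  by move=> h; apply/ltW/(le_lt_trans hQ)/(le_lt_trans h); lra.
have hQ := le_wcost_sink Fy' wQ.
have gQ1 : wgain gam Q <= 1 by lra.
rewrite leNgt; apply/negP => lt.
by have := le_affine_self_down gQ1 (ltW lt) hQ; rewrite -ed; lra.
Qed.

Lemma newton_noroot_infeasible yb d f g d' yb' f' g' : newton_inv yb d f g ->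
  (forall y', F y' -> y' u <= d') ->
  oracle tl hd c gam B u yb d' yb' f'%:E g' -> f' < 0 -> 0 <= g' ->
  ~ feasible tl hd c gam.
Proof.
move=> Ni d'_ub ho f'0 g'0 [y' Fy'].
have [_ _ _ _ [[g'1 _]|[Q [wQ _ eg ed]]]] := oracle_fin ho.
  by move: g'0; rewrite g'1 ler0N1.
have gQ1 : 1 <= wgain gam Q by lra.
by have := le_affine_self_up gQ1 (d'_ub _ Fy') (le_wcost_sink Fy' wQ); rewrite -ed; lra.
Qed.

Lemma newton_sound yb d f g res :
  newton tl hd c gam B u yb d f g res -> newton_inv yb d f g ->
  feasible tl hd c gam ->
  res <> NoRoot R V /\ (forall yb', res = Root yb' -> exists d', newton_inv yb' d' 0 0).
Proof.
move=> hn; elim: hn => {yb d f g res}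
  [yb d g | yb d f g yb1 g1 f0 ho | yb d f g yb1 f1 g1 f0 ho f1n g1p
  | yb d f g yb1 f1 g1 yb2 f2 g2 res f0 ho1 _ ho2 f2n g2n _ IH
  | yb d f g yb1 f1 g1 yb2 fv2 g2 res f0 ho1 _ _ _ _ IH] Ni feas.
- by split => // yb' [<-]; exists d; case: Ni => *; split => //; left.
- split => // _; apply: oracle_finite ho (ninv_ub Ni) (ninv_sat Ni) (ninv_le Ni) feas _.
  exact: newton_step_ub Ni f0.
- split => // _.
  exact: newton_noroot_infeasible Ni (newton_step_ub Ni f0) ho f1n g1p feas.
- have N1 := newton_inv_step Ni (newton_step_ub Ni f0) ho1 (newton_step_le0 Ni f0 ho1).
  exact: IH (newton_inv_step N1 (lookahead_ub N1 ho2 f2n g2n) ho2 (ltW f2n)) feas.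
- have N1 := newton_inv_step Ni (newton_step_ub Ni f0) ho1 (newton_step_le0 Ni f0 ho1).
  exact: IH N1 feas.
Qed.

Section Start.
Variables (r : R) (yb1 : option V -> \bar R) (P : seq E).
Hypothesis y_ub : upper_bound y.
Hypothesis y_sat : sat_arcs A y.
Hypothesis start : start_label tl hd c gam B y u r.
Hypothesis gv : grapevine tl hd c gam B u (ybar_init y u r) (Some u) yb1 P.

Local Notation L0 := (ybar_init y u r).

Lemma le_minout y' : F y' -> ((y' u)%:E <= minout tl hd c gam y u)%E.
Proof.
move=> Fy'; apply: le_bigmin; first exact: leey.
move=> e /eqP tle; apply: (@le_trans _ _ (aff (c e) (gam e) (y' (hd e))%:E)).
  by rewrite aff_fin lee_fin -tle (feasible_sol_arc _ Fy').
by rewrite lee_aff2 // y_ub.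
Qed.

Lemma minout_le_arc e : tl e = u ->
  (minout tl hd c gam y u <= aff (c e) (gam e) (y (hd e)))%E.
Proof. by move=> tle; apply: bigmin_le_cond; rewrite tle. Qed.

Lemma start_label_ub y' : F y' -> y' u <= r.
Proof.
move=> Fy'; case: start => [em|[_ [C [/andP[wC _] gC ->]]]].
  by have := le_minout Fy'; rewrite em lee_fin.
have := sat_le_wcost gam_gt0 (fun e _ => feasible_sol_arc e Fy') wC.
by move=> hC; rewrite ler_pdivlMr ?subr_gt0 //; nra.
Qed.

Lemma start_lb y' : F y' -> forall x, ((split_sol u y' x)%:E <= L0 x)%E.
Proof.
move=> Fy' [v|] /=; last by rewrite lee_fin start_label_ub.
by case: eqP => [->|_]; [rewrite lee_fin start_label_ub|exact: y_ub].
Qed.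

Lemma start_sat : feasible tl hd c gam -> ~~ violated tl hd c gam B u yb1.
Proof.
move=> [y0 Fy0]; apply: (grapevine_not_violated gam_gt0 gv Fy0).
- by move=> v; have := start_lb Fy0 (Some v).
- by have := start_lb Fy0 None.
- move=> e Be tle hde /=; rewrite (negPf tle) (negPf hde).
  by apply: y_sat; move: Be; rewrite /addout (negPf tle) orbF.
- move=> z C nC wC Cu /=.
  have [zu wAC] := closed_walk_avoiding_u nC wC Cu.
  by rewrite (negPf zu); exact: y_noabs wAC.
Qed.

Lemma start_arc_sat e : B e -> sH e != None ->
  (L0 (sT e) <= arcval hd c gam u L0 e)%E.
Proof.
move=> Be; rewrite /arcval /Defs.sH; case: (hd e =P u) => [//|/eqP hde] _ /=.
rewrite (negPf hde) -/(aff _ _ _).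
case: (eqVneq (tl e) u) => [tle|tle].
  case: start => [em|[em _]]; first by rewrite -em; exact: minout_le_arc.
  by have := minout_le_arc tle; rewrite em leye_eq => /eqP ->; exact: leey.
by apply: y_sat; move: Be; rewrite /addout (negPf tle) orbF.
Qed.

Lemma start_trace_sink : P != [::] -> wend hd u (Some u) P = None.
Proof.
move=> nP; have [_ _ _ _ /(_ nP) [e [Be he lt]]] := grapevine_trace gam_gt0 gv.
case E0: (wend hd u (Some u) P) => [z|] //.
by have := start_arc_sat Be; rewrite he E0 leNgt lt => /(_ isT).
Qed.

Lemma start_trace_infeasible :
  feasible tl hd c gam -> P != [::] -> 1 <= wgain gam P -> False.
Proof.
move=> [y0 Fy0] nP gP1.
have [wP _ vP lt _] := grapevine_trace gam_gt0 gv.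
move: wP vP (lt nP); rewrite start_trace_sink // => wP -> /=.
rewrite eqxx /wval /= aff_fin lte_fin => lt_r.
have := le_affine_self_up gP1 (start_label_ub Fy0) (le_wcost_sink Fy0 wP).
by rewrite leNgt lt_r.
Qed.

Lemma start_newton_inv a : ~~ violated tl hd c gam B u yb1 -> yb1 (Some u) = a%:E ->
  newton_inv yb1 r (a - r) (wgain gam P - 1).
Proof.
move=> sat1 yb1u.
have ar : a <= r by have := grapevine_le gv (Some u); rewrite yb1u /= eqxx lee_fin.
have [wP sP vP _ _] := grapevine_trace gam_gt0 gv.
split => //.
- move=> y' Fy' v.
  apply: (grapevine_lb gam_gt0 gv (z := split_sol u y') _ (start_lb Fy') (Some v)).
  by move=> e _; exact: split_sol_arc.
- exact: start_label_ub.
- by rewrite (grapevine_sink gv).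
- by rewrite yb1u addrC subrK.
- by rewrite subr_le0.
- case: (eqVneq P [::]) => [P0|nP].
    by left; move: vP; rewrite yb1u P0 wval_nil /= eqxx => -[->]; rewrite subrr.
  right; right; exists P.
  move: wP vP; rewrite start_trace_sink // => wP; rewrite yb1u /wval /= aff_fin.
  by case=> ->; split => //; rewrite addrC subrK.
- by move=> z zu; have := grapevine_le gv (Some z); rewrite /= (negPf zu).
Qed.

End Start.
End Phase.
End Algorithm.

Section Labels.
Variables (R : realFieldType) (V E : finType) (tl hd : E -> V) (c gam : E -> R).
Hypothesis gam_gt0 : forall e, 0 < gam e.

Local Notation F := (feasible_sol tl hd c gam).
Local Notation n := #|V|.
Local Notation walk := (is_walk tl hd).

Lemma sat_arcs_pinfty (A : pred E) (y : V -> \bar R) x z W :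
  sat_arcs tl hd c gam A y -> walk A x z W -> y x = +oo%E -> y z = +oo%E.
Proof.
move=> y_sat; elim: W x => [|e W IH] x /=; first by move/eqP <-.
case/and3P => Ae /eqP <- wW yx; apply: IH wW _.
by apply/eqP; have := y_sat e Ae; rewrite yx leye_eq aff_eqy.
Qed.

Section InfiniteLabel.
Variables (A : pred E) (u : V) (y : V -> \bar R).
Local Notation B := (addout tl A u).
Hypothesis y_u : y u = +oo%E.
Hypothesis y_sat : sat_arcs tl hd c gam B y.
Hypothesis y_noabs : forall x C, x != u -> walk A x x C -> y x = +oo%E ->
  1 <= wgain gam C.
Hypothesis no_absorbing_cycle :
  ~ (exists C, is_cycle_at tl hd B u C /\ wgain gam C < 1).

(* A closed walk at [u] either returns to [u] early, or is a cycle, or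
   contains a closed walk avoiding [u], which then lies in [A] at a node that
   inherits the label [+oo] from [u]. *)
Lemma closed_walk_at_u_gain k W : (size W <= k)%N -> walk B u u W ->
  1 <= wgain gam W.
Proof.
elim: k W => [|k IH] W; first by rewrite leqn0 size_eq0 => /eqP -> _; rewrite wgain_nil.
case/lastP: W => [_ _|W el]; first by rewrite wgain_nil.
rewrite size_rcons ltnS is_walk_rcons => sW /and3P[wW Bel hel].
have [uW|uW] := boolP (u \in map hd W).
  have [W1 [W2 [eW nW1 w1 w2]]] := is_walk_prefix uW wW.
  have nW1' : (0 < size W1)%N by rewrite lt0n size_eq0.
  rewrite eW size_cat in sW; rewrite eW rcons_cat wgain_cat; apply: mulr_ege1.
    by apply: IH w1; lia.
  by apply: IH; rewrite ?is_walk_rcons ?w2 ?Bel // size_rcons; lia.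
have [uniqW|nuW] := boolP (uniq (map hd W)).
  rewrite leNgt; apply/negP => lt1; apply: no_absorbing_cycle.
  exists (rcons W el); split => //; rewrite /is_cycle_at is_walk_rcons wW Bel hel.
  by rewrite size_rcons /= -cats1 take_size_cat.
have nuW' : ~~ uniq (u :: map hd W) by rewrite /= negb_and nuW orbT.
have [Q1 [D [Q2 [w [eW nD w1 wD w2]]]]] := is_walk_cycle wW nuW'.
have Du f : f \in D -> tl f != u.
  move=> fD; apply: contraNneq uW => <-; rewrite eW !map_cat !mem_cat.
  by rewrite (is_walk_closed_tails wD fD) orbT.
have wu : w != u.
  by case: (D) nD wD Du => [//|f D'] _ /= /and3P[_ /eqP <- _] /(_ f (mem_head _ _)).
have wAD : walk A w w D.
  apply: is_walk_restrict wD _ => f fD; rewrite /addout => /orP[//|/eqP tf].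
  by have := Du f fD; rewrite tf eqxx.
have D1 := y_noabs wu wAD (sat_arcs_pinfty y_sat w1 y_u).
have nD' : (0 < size D)%N by rewrite lt0n size_eq0.
rewrite eW !rcons_cat.
apply: le_trans (wgain_drop_ge1 gam_gt0 Q1 (rcons Q2 el) D1).
apply: IH; last by rewrite is_walk_cat -(is_walk_last w1) w1 is_walk_rcons w2 Bel.
by rewrite size_cat size_rcons; rewrite eW !size_cat in sW; lia.
Qed.

Lemma closed_walk_gain x C : walk B x x C -> y x = +oo%E -> 1 <= wgain gam C.
Proof.
move=> wC yx; have [/hasP[e eC /eqP tle]|] := boolP (has (fun e => tl e == u) C).
  case/splitPr: eC wC => C1 C2; rewrite is_walk_cat => /andP[w1 w2].
  have lastu : last x (map hd C1) = u by move: w2 => /= /and3P[_ /eqP <-].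
  rewrite lastu in w1 w2.
  have wR : walk B u u ((e :: C2) ++ C1).
    by rewrite is_walk_cat -(is_walk_last w2) w2 w1.
  by have := closed_walk_at_u_gain (leqnn _) wR; rewrite !wgain_cat mulrC.
move/hasPn => Cu; have [xu|xu] := eqVneq x u.
  case: C wC Cu => [|f C] /=; first by rewrite wgain_nil.
  by case/and3P => _ /eqP tf _ /(_ f (mem_head _ _)); rewrite tf xu eqxx.
apply: y_noabs xu _ yx; apply: is_walk_restrict wC _ => f fC.
by rewrite /addout (negPf (Cu f fC)) orbF.
Qed.

End InfiniteLabel.
Section FinalLabels.
Variables (A : pred E) (y : V -> \bar R) (y0 : V -> R).
Hypothesis A_all : forall e, A e.
Hypothesis y_ub : upper_bound tl hd c gam y.
Hypothesis y_sat : sat_arcs tl hd c gam A y.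
Hypothesis y_noabs : no_absorbing_at_infty tl hd gam A y.
Hypothesis Fy0 : F y0.

Local Notation gmin := (\big[Order.min/1]_e gam e).

(* Raise the infinite labels to [y0 + K] and relax [n] rounds: the result is
   feasible, and at [u] it is realized by a walk either to a raised node
   (worth at least [y0 u + gmin^n K]) or to a finite one (worth at least
   [y u]). *)
Lemma feasible_above u (t : R) :
  exists z, F z /\ ((t%:E <= (z u)%:E)%E \/ (y u <= (z u)%:E)%E).
Proof.
have gn_gt0 : 0 < gmin ^+ n.
  rewrite exprn_gt0 //; apply: (big_ind (fun z => 0 < z)) => // a b a0 b0.
  by rewrite lt_min a0 b0.
pose K := Num.max 0 ((t - y0 u) / gmin ^+ n).
have K0 : 0 <= K by rewrite le_max lexx.
have tK : t <= y0 u + gmin ^+ n * K.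
  by rewrite -lerBlDl mulrC -ler_pdivrMr // le_max lexx orbT.
pose L0 v : \bar R := if y v == +oo%E then (y0 v + K)%:E else y v.
pose Ls i := iter i (relax tl hd c gam A) L0.
have Ls_succ i x : (i < n)%N -> Ls i.+1 x = relax tl hd c gam A (Ls i) x by [].
have sat0 e : A e -> y0 (tl e) <= c e + gam e * y0 (hd e).
  by move=> _; exact: feasible_sol_arc e Fy0.
have y0L v : ((y0 v)%:E <= L0 v)%E.
  by rewrite /L0; case: ifP => _; [rewrite lee_fin lerDl|exact: y_ub].
have closed w C : C != [::] -> walk A w w C ->
    1 <= wgain gam C \/
    exists l, Ls 0%N w = l%:E /\ l <= wcost c gam C + wgain gam C * l.
  move=> _ wC; have [yw|yw] := eqVneq (y w) +oo%E; first by left; exact: y_noabs wC yw.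
  right; have := sat_le_wval gam_gt0 y_sat wC; rewrite /Ls /= /L0 (negPf yw) /wval.
  by case: (y w) yw (y_ub Fy0 w) => [l||] //= _ _; rewrite aff_fin lee_fin; exists l.
pose z := Ls n.
have z_fin v : z v = (fine (z v))%:E.
  have := rounds_lb gam_gt0 Ls_succ v (leqnn n) sat0 y0L.
  have := rounds_le0 Ls_succ v (leqnn n); rewrite -/(z v).
  case: (z v) => [r||] //=; rewrite /L0; case: ifP => // /negbT yv.
  by have := y_ub Fy0 v; case: (y v) yv.
exists (fun v => fine (z v)); split.
  move=> e; have := rounds_sat gam_gt0 Ls_succ (leqnSn n) sat0 y0L closed (A_all e).
  by rewrite -/z (z_fin (tl e)) (z_fin (hd e)) aff_fin lee_fin lerBlDr addrC.
rewrite -z_fin /z; have [w [W [wW sW ->]]] := rounds_wval gam_gt0 Ls_succ u (leqnn n).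
rewrite /wval /Ls /= /L0; case: ifP => [_|/negbT yw].
  left; rewrite aff_fin lee_fin; apply: le_trans tK _.
  have := sat_le_wcost gam_gt0 sat0 wW; have := wgain_ge_expn gam_gt0 sW.
  by move: K0; nra.
by right; exact: (sat_le_wval gam_gt0 y_sat wW).
Qed.

Lemma final_labels_ymax : is_ymax tl hd c gam y.
Proof.
move=> u; split=> [y' Fy'|b b_ub]; first exact: y_ub.
case yu: (y u) => [r||].
- have [z [Fz [|]]] := feasible_above u r; last rewrite yu;
    by move/le_trans; apply; exact: b_ub.
- case: b b_ub => [s||] b_ub; last by have := b_ub _ Fy0.
    have [z [Fz [|]]] := feasible_above u (s + 1)%R; last by rewrite yu.
    by rewrite lee_fin => lt; exfalso; have := b_ub _ Fz; rewrite lee_fin; lra.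
  exact: leey.
- by have := y_ub Fy0 u; rewrite yu.
Qed.

End FinalLabels.
End Labels.

Section Phases.
Variables (R : realFieldType) (V E : finType) (tl hd : E -> V) (c gam : E -> R).
Hypothesis gam_gt0 : forall e, 0 < gam e.

Local Notation walk := (is_walk tl hd).

Record phase_inv (A : pred E) (y : V -> \bar R) (s : seq V) : Prop := {
  pinv_ub : upper_bound tl hd c gam y;
  pinv_sat : sat_arcs tl hd c gam A y;
  pinv_cover : forall e, A e || (tl e \in s);
  pinv_noabs : no_absorbing_at_infty tl hd gam A y }.

Lemma cover_addout (A : pred E) u s :
  (forall e, A e || (tl e \in u :: s)) -> forall e, addout tl A u e || (tl e \in s).
Proof.
by move=> cover e; have := cover e; rewrite /addout inE; case: (A e); case: (tl e == u).
Qed.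

Lemma phase_infty_inv A y u s :
  minout tl hd c gam y u = +oo%E ->
  ~ (exists C, is_cycle_at tl hd (addout tl A u) u C /\ wgain gam C < 1) ->
  phase_inv A y (u :: s) ->
  phase_inv (addout tl A u) (fun v => if v == u then +oo%E else y v) s.
Proof.
move=> minout_u no_cycle [y_ub y_sat cover y_noabs].
set y' := fun v => _.
have yy' v : (y v <= y' v)%E by rewrite /y'; case: eqP => // _; exact: leey.
have y'_sat : sat_arcs tl hd c gam (addout tl A u) y'.
  move=> e; rewrite /addout /y'; have [tle _|tle] := eqVneq (tl e) u.
    have [hde|hde] := eqVneq (hd e) u; first by rewrite aff_pinfty.
    have := minout_le_arc hd c gam y tle.
    by rewrite minout_u leye_eq => /eqP ->.
  rewrite orbF => Ae; apply: le_trans (y_sat e Ae) _.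
  by rewrite lee_aff2 //; exact: yy'.
have y'u : y' u = +oo%E by rewrite /y' eqxx.
have y'_noabs x C : x != u -> walk A x x C -> y' x = +oo%E -> 1 <= wgain gam C.
  by rewrite /y' => /negPf ->; exact: y_noabs.
split => //.
- by move=> y'' Fy'' v; apply: le_trans (yy' v); exact: y_ub.
- exact: cover_addout.
- by move=> x C; exact: (closed_walk_gain gam_gt0 y'u y'_sat y'_noabs no_cycle).
Qed.

Lemma phase_root_inv A y u s r yb1 P a yb :
  start_label tl hd c gam (addout tl A u) y u r ->
  grapevine tl hd c gam (addout tl A u) u (ybar_init y u r) (Some u) yb1 P ->
  ~~ violated tl hd c gam (addout tl A u) u yb1 -> yb1 (Some u) = a%:E ->
  newton tl hd c gam (addout tl A u) u yb1 r (a - r) (wgain gam P - 1) (Root yb) ->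
  feasible tl hd c gam -> phase_inv A y (u :: s) ->
  phase_inv (addout tl A u) (fun v => yb (Some v)) s.
Proof.
move=> start gv sat1 yb1u hn feas [y_ub y_sat cover y_noabs].
have Ni := start_newton_inv gam_gt0 y_ub y_sat start gv sat1 yb1u.
have [_ /(_ yb erefl) [d Nd]] := newton_sound gam_gt0 y_noabs hn Ni feas.
set y' := fun v => _.
have y'u : y' u = d%:E by rewrite /y' (ninv_u Nd) addr0.
have y'_sat : sat_arcs tl hd c gam (addout tl A u) y'.
  move=> e Be; move/existsPn: (ninv_sat Nd) => /(_ e); rewrite Be /= -leNgt.
  rewrite /arcval /y' /Defs.sH /=; case: eqP => [hde|_] //.
  by rewrite (ninv_sink Nd) hde (ninv_u Nd) addr0.
split => //.
- exact: (ninv_ub Nd).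
- exact: cover_addout.
move=> x C wC y'x.
have Cu e : e \in C -> tl e != u.
  move=> eC; apply/negP => /eqP tle.
  case/splitPr: eC wC => C1 C2; rewrite is_walk_cat => /andP[w1 w2].
  have lastu : last x (map hd C1) = u by move: w2 => /= /and3P[_ /eqP <-].
  by have := sat_arcs_pinfty gam_gt0 y'_sat w1 y'x; rewrite lastu y'u.
case: C wC Cu => [|f C] wC Cu; first by rewrite wgain_nil.
have xu : x != u by move: wC => /= /and3P[_ /eqP <- _]; apply: Cu; rewrite mem_head.
apply: y_noabs _ _.
  apply: is_walk_restrict wC _ => e eC; rewrite /addout => /orP[//|/eqP tle].
  by have := Cu e eC; rewrite tle eqxx.
by have := ninv_le Nd xu; rewrite -/(y' x) y'x leye_eq => /eqP.
Qed.

Lemma phases_sound A y s res :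
  phases tl hd c gam A y s res -> feasible tl hd c gam -> phase_inv A y s ->
  res <> Infeasible /\ (forall y', res = Labels y' -> is_ymax tl hd c gam y').
Proof.
elim=> {A y s res}
  [A y | A y u s res minout_u no_cycle _ IH
  | A y u s r yb1 P start gv bad
  | A y u s r yb1 P a start gv good yb1u hn
  | A y u s r yb1 P a yb res start gv good yb1u hn _ IH] feas inv.
- split => // y' [<-]; case: feas => y0 Fy0; case: inv => y_ub y_sat cover y_noabs.
  have A_all e : A e by have := cover e; rewrite orbF.
  exact: (final_labels_ymax gam_gt0 A_all y_ub y_sat y_noabs Fy0).
- exact: IH feas (phase_infty_inv minout_u no_cycle inv).
- case: inv => y_ub y_sat _ y_noabs; split => // _.
  case/orP: bad => [|/andP[nP gP1]].
    by apply/negP; exact: (start_sat gam_gt0 y_noabs y_ub y_sat start gv feas).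
  apply: (start_trace_infeasible gam_gt0 y_ub y_sat start gv feas _ gP1).
  by rewrite -size_eq0 -lt0n.
- case: inv => y_ub y_sat _ y_noabs; split => // _.
  move: good; rewrite negb_or => /andP[sat1 _].
  have Ni := start_newton_inv gam_gt0 y_ub y_sat start gv sat1 yb1u.
  by case: (newton_sound gam_gt0 y_noabs hn Ni feas).
- move: good; rewrite negb_or => /andP[sat1 _].
  exact: IH feas (phase_root_inv start gv sat1 yb1u hn feas inv).
Qed.

End Phases.

Theorem theorem4p8 (R : realFieldType) (V E : finType) (tl hd : E -> V)
    (c gam : E -> R) :
  (forall e, 0 < gam e) ->
  forall s : seq V, perm_eq s (enum V) ->
  forall res : result R V, alg3 tl hd c gam s res ->
  (forall y, res = Labels y -> feasible tl hd c gam -> is_ymax tl hd c gam y) /\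
  (res = Infeasible -> ~ feasible tl hd c gam).
Proof.
move=> gam_gt0 s s_perm res alg.
have inv0 : phase_inv tl hd c gam (fun _ => false) (fun _ => +oo%E) s.
  split => [y' _ v|//|e|x [|e C] //= _ _]; first exact: leey.
    by rewrite (perm_mem s_perm) mem_enum.
  by rewrite wgain_nil.
split => [y res_y feas|res_inf feas].
  by have [_] := phases_sound gam_gt0 alg feas inv0; apply.
by have [] := phases_sound gam_gt0 alg feas inv0.
Qed.
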